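(* Let $p\in(0,1)$ and $q=-\log(1-p)$. For rectangles $R\subseteq R'$ with $\dim(R)=(a,b)$ and $\dim(R')=(a+s,b+t)$, $$ \mathbb{P}_p\big[D(R,R')\big]\le \exp\Big(-s\,g(bq)-t\,g(aq)+2[g(bq)+g(aq)]+st\,q\,e^{2[g(bq)+g(aq)]}\Big). $$
   Context: Under $\mathbb{P}_p$, the initial configuration $\sigma$ assigns independent states to sites of $\mathbb{Z}^2$: the origin is active with probability $p$, else empty; every other site is occupied with probability $p$, else empty. A rectangle is $\{a,\dots,c\}\times\{b,\dots,d\}\subset\mathbb{Z}^2$ with dimensions $(c-a+1,d-b+1)$; columns are $\{x\}\times\{b,\dots,d\}$ and rows $\{a,\dots,c\}\times\{y\}$. A rectangle has a double gap in the columns (resp. rows) if two consecutive columns (resp. rows) consist entirely of empty sites in $\sigma$. For $R=\{x_1,\dots,x_2\}\times\{y_1,\dots,y_2\}\subseteq R'=\{X_1,\dots,X_2\}\times\{Y_1,\dots,Y_2\}$, $D(R,R')$ is the event that each of the (possibly empty) rectangles $\{X_1,\dots,x_1-1\}\times\{Y_1,\dots,Y_2\}$ and $\{x_2+1,\dots,X_2\}\times\{Y_1,\dots,Y_2\}$ has no double gap in the columns, and each of $\{X_1,\dots,X_2\}\times\{Y_1,\dots,y_1-1\}$ and $\{X_1,\dots,X_2\}\times\{y_2+1,\dots,Y_2\}$ has no double gap in the rows. Also $\beta(u)=\frac{u+\sqrt{u(4-3u)}}{2}$ and $g(z)=-\log\beta(1-e^{-z})$ for $z>0$. *)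

From HB Require Import structures.
From mathcomp Require Import all_boot all_order all_algebra.
From mathcomp Require Import boolp reals sequences exp.
Set Implicit Arguments. Unset Strict Implicit. Unset Printing Implicit Defensive.
Import Order.TTheory GRing.Theory Num.Theory.
Local Open Scope ring_scope.

Definition state := option bool.
Definition Empty : state := None.
Definition Occupied : state := Some false.
Definition Active : state := Some true.

Definition site := (int * int)%type.
Definition config := site -> state.

(* rectangle {x1..x2} x {y1..y2} *)
Record rect := Rect { rx1 : int; rx2 : int; ry1 : int; ry2 : int }.

Definition subrect (R R' : rect) : Prop :=
  [/\ rx1 R' <= rx1 R, rx2 R <= rx2 R', ry1 R' <= ry1 R & ry2 R <= ry2 R'].

Definition rwidth (R : rect) : int := rx2 R - rx1 R + 1.
Definition rheight (R : rect) : int := ry2 R - ry1 R + 1.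

Definition col_empty (s : config) (x y1 y2 : int) : Prop :=
  forall y : int, y1 <= y <= y2 -> s (x, y) = Empty.
Definition row_empty (s : config) (x1 x2 y : int) : Prop :=
  forall x : int, x1 <= x <= x2 -> s (x, y) = Empty.

Definition no_dgap_cols (s : config) (x1 x2 y1 y2 : int) : Prop :=
  ~ exists x : int, [/\ x1 <= x, x + 1 <= x2,
                        col_empty s x y1 y2 & col_empty s (x + 1) y1 y2].
Definition no_dgap_rows (s : config) (x1 x2 y1 y2 : int) : Prop :=
  ~ exists y : int, [/\ y1 <= y, y + 1 <= y2,
                        row_empty s x1 x2 y & row_empty s x1 x2 (y + 1)].

Definition Dev (R R' : rect) (s : config) : Prop :=
  [/\ no_dgap_cols s (rx1 R') (rx1 R - 1) (ry1 R') (ry2 R'),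
      no_dgap_cols s (rx2 R + 1) (rx2 R') (ry1 R') (ry2 R'),
      no_dgap_rows s (rx1 R') (rx2 R') (ry1 R') (ry1 R - 1) &
      no_dgap_rows s (rx1 R') (rx2 R') (ry2 R + 1) (ry2 R')].

Definition site_law {R : realType} (p : R) (z : site) (st : state) : R :=
  if z == (0%Z, 0%Z) then
    match st with Some true => p | None => 1 - p | Some false => 0 end
  else
    match st with Some false => p | None => 1 - p | Some true => 0 end.

Definition winW (W : rect) : nat := `|rwidth W|%N.
Definition winH (W : rect) : nat := `|rheight W|%N.
Definition wsite (W : rect) (ij : 'I_(winW W) * 'I_(winH W)) : site :=
  (rx1 W + (ij.1 : nat)%:Z, ry1 W + (ij.2 : nat)%:Z).

(* configuration on Z^2 determined by the window configuration w
   (sites outside the window are set to Empty; irrelevant for events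
   depending only on the window) *)
Definition extend (W : rect) (w : {ffun 'I_(winW W) * 'I_(winH W) -> state})
  : config :=
  fun z => if [pick ij | wsite ij == z] is Some ij then w ij else Empty.

(* P_p[E] for an event E depending only on the sites of the window W:
   the marginal of the product measure P_p on the (finite) window. *)
Definition Pp {R : realType} (p : R) (W : rect) (E : config -> Prop) : R :=
  \sum_(w : {ffun 'I_(winW W) * 'I_(winH W) -> state})
     (\prod_(ij : 'I_(winW W) * 'I_(winH W)) site_law p (wsite ij) (w ij))
     * (if `[< E (extend w) >] then 1 else 0).

Definition beta {R : realType} (u : R) : R := (u + Num.sqrt (u * (4 - 3 * u))) / 2.
Definition gfun {R : realType} (z : R) : R := - ln (beta (1 - expR (- z))).

From HB Require Import structures.
From mathcomp Require Import all_boot all_order all_algebra.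
From mathcomp Require Import boolp reals sequences exp.
From mathcomp Require Import zify ring lra.
Set Implicit Arguments. Unset Strict Implicit. Unset Printing Implicit Defensive.
Import Order.TTheory GRing.Theory Num.Theory.
Local Open Scope ring_scope.

(* Write D(R, R') as the intersection of four events, one per
   margin strip of R' around R (columns to the left and right, rows below and
   above), each saying that the strip has no two consecutive empty lines.  A
   line of a strip meets the two transversal strips in its corner sites; all
   its other sites belong to no other strip.  Integrating out these inner sites
   first, the four events become independent.  Along one strip, say of columns
   of height b, the inner part of a column is occupied with probability
   u = 1 - (1-p)^b, and "no two consecutive empty columns" is governed by the
   transfer matrix [[u, 1-u], [u, 0]], whose Perron root is beta(u) = e^(-g(bq)).
   This bounds the conditional probability for a strip of n columns by
   e^(-g(bq) (n - 1 - 2k)), where k counts the columns with an occupied corner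
   site.  Finally k is at most the number N of occupied corner sites, a binomial
   variable on s t sites, and E[e^(cN)] <= exp(p (e^c - 1) s t). *)

Definition indic {R : realType} (b : bool) : R := if b then 1 else 0.

Lemma indic_and {R : realType} (b1 b2 : bool) :
  indic (b1 && b2) = indic b1 * indic b2 :> R.
Proof. by case: b1; case: b2; rewrite /indic ?mulr1 ?mulr0. Qed.

Lemma indic_ge0 {R : realType} (b : bool) : 0 <= indic b :> R.
Proof. by case: b; rewrite /indic. Qed.

Lemma indic_le {R : realType} (b1 b2 : bool) : (b1 -> b2) -> indic b1 <= indic b2 :> R.
Proof. by case: b1; case: b2 => // /(_ isT). Qed.

(** * Product measures on finite configuration spaces *)

Section ProductMeasure.
Variables (R : realType) (I S : finType) (mu : I -> S -> R).
Hypothesis mu_ge0 : forall i st, 0 <= mu i st.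
Hypothesis mu_sum : forall i, \sum_st mu i st = 1.

Local Notation conf := {ffun I -> S}.
Implicit Types (F G : conf -> R) (w : conf) (l : seq I) (i : I) (st : S).

Definition expect (F : conf -> R) : R := \sum_(w : conf) (\prod_i mu i (w i)) * F w.

Definition upd (w : conf) i st : conf := [ffun j => if j == i then st else w j].

(* [integ i F] averages [F] over the state of site [i], i.e. it is the
   conditional expectation of [F] given all the other sites. *)
Definition integ i (F : conf -> R) : conf -> R :=
  fun w => \sum_st mu i st * F (upd w i st).

Definition integs (l : seq I) (F : conf -> R) : conf -> R := foldr integ F l.

Definition nodep {T : Type} i (F : conf -> T) := forall w st, F (upd w i st) = F w.

Lemma updE w i st j : upd w i st j = if j == i then st else w j.
Proof. by rewrite ffunE. Qed.

Lemma upd_upd w i st st' : upd (upd w i st) i st' = upd w i st'.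
Proof. by apply/ffunP=> j; rewrite !updE; case: eqP. Qed.

Lemma upd_id w i : upd w i (w i) = w.
Proof. by apply/ffunP=> j; rewrite !updE; case: eqP => // ->. Qed.

Lemma updC w i j st st' : i != j ->
  upd (upd w i st) j st' = upd (upd w j st') i st.
Proof.
move=> ij; apply/ffunP=> k; rewrite !updE.
by case: (eqVneq k j) => [->|//]; rewrite eq_sym (negbTE ij).
Qed.

Lemma prod_mu_upd w i st :
  (\prod_j mu j (upd w i st j)) * mu i (w i) = (\prod_j mu j (w j)) * mu i st.
Proof.
rewrite (bigD1 i) //= [in RHS](bigD1 i) //= updE eqxx.
rewrite (eq_bigr (fun j => mu j (w j))) => [|j /negbTE ji]; last by rewrite updE ji.
ring.
Qed.

(* Fubini over site [i]: [(w, st) |-> (upd w i st, w i)] is a bijection of conf * S. *)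
Lemma expect_integ i F : expect (integ i F) = expect F.
Proof.
rewrite /expect /integ.
under eq_bigr do rewrite mulr_sumr.
rewrite pair_big /=.
pose h (ws : conf * S) := (upd ws.1 i ws.2, ws.1 i).
have h_inj : injective h.
  move=> [w st] [w' st'] [e1 e2].
  have est : st = st' by move: (congr1 (fun f : conf => f i) e1); rewrite !updE eqxx.
  subst st'; congr pair.
  by rewrite -(upd_id w i) -(upd_id w' i) -e2 -(upd_upd w i st) e1 upd_upd.
rewrite (reindex_inj h_inj) /=.
rewrite (eq_bigr (fun ws : conf * S => (\prod_j mu j (ws.1 j)) * mu i ws.2 * F ws.1)); last first.
  by move=> -[w st] _ /=; rewrite upd_upd upd_id mulrA prod_mu_upd.
rewrite -(pair_big xpredT xpredT (fun (w : conf) (st : S) => (\prod_j mu j (w j)) * mu i st * F w)) /=.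
apply: eq_bigr => w _.
by rewrite -[in RHS](mulr1 (F w)) -(mu_sum i) !mulr_sumr; apply: eq_bigr => st _; ring.
Qed.

Lemma expect_integs l F : expect (integs l F) = expect F.
Proof. by elim: l => //= i l IH; rewrite expect_integ. Qed.

Lemma integ_nodep i F : nodep i F -> integ i F = F.
Proof.
move=> hF; apply: funext => w; rewrite /integ.
under eq_bigr do rewrite hF.
by rewrite -mulr_suml mu_sum mul1r.
Qed.

Lemma integs_nodep l F : (forall i, i \in l -> nodep i F) -> integs l F = F.
Proof.
elim: l => //= i l IH hl.
rewrite IH => [|j jl]; last by apply: hl; rewrite inE jl orbT.
by apply: integ_nodep; apply: hl; rewrite mem_head.
Qed.

Lemma nodep_integ i j F : nodep j F -> nodep j (integ i F).
Proof.
move=> hF w st; rewrite /integ; apply: eq_bigr => st' _.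
case: (eqVneq i j) => [->|ij]; first by rewrite upd_upd.
by rewrite updC 1?eq_sym // hF.
Qed.

Lemma nodep_integs l j F : nodep j F -> nodep j (integs l F).
Proof. by elim: l => //= i l IH /IH; apply: nodep_integ. Qed.

Lemma nodepM j (F G : conf -> R) :
  nodep j F -> nodep j G -> nodep j (fun w => F w * G w).
Proof. by move=> hF hG w st; rewrite hF hG. Qed.

Lemma integs_mull l F G : (forall i, i \in l -> nodep i F) ->
  integs l (fun w => F w * G w) = (fun w => F w * integs l G w).
Proof.
elim: l => //= i l IH hl; rewrite IH => [|j jl]; last by apply: hl; rewrite inE jl orbT.
have hFi := hl i (mem_head i l).
apply: funext => w; rewrite /integ mulr_sumr; apply: eq_bigr => st _.
by rewrite hFi mulrCA.
Qed.

Lemma integs_mulr l F G : (forall i, i \in l -> nodep i G) ->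
  integs l (fun w => F w * G w) = (fun w => integs l F w * G w).
Proof.
move=> hG; have -> : (fun w => F w * G w) = (fun w => G w * F w).
  by apply: funext => w; rewrite mulrC.
by rewrite integs_mull //; apply: funext => w; rewrite mulrC.
Qed.

Lemma integsZ l c F : integs l (fun w => c * F w) = (fun w => c * integs l F w).
Proof. exact: integs_mull. Qed.

Lemma integs_add l F G :
  integs l (fun w => F w + G w) = (fun w => integs l F w + integs l G w).
Proof.
elim: l => //= i l ->; apply: funext => w.
by rewrite /integ -big_split; apply: eq_bigr => st _; rewrite mulrDr.
Qed.

Lemma integs_subl l c F : integs l (fun w => c - F w) = (fun w => c - integs l F w).
Proof.
rewrite integs_add integs_nodep //.
have -> : (fun w => - F w) = (fun w => -1 * F w) by apply: funext => w; rewrite mulN1r.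
by rewrite integsZ; apply: funext => w; rewrite mulN1r.
Qed.

Lemma integs_cat l1 l2 F : integs (l1 ++ l2) F = integs l1 (integs l2 F).
Proof. exact: foldr_cat. Qed.

Lemma integs_cat_mul l1 l2 F G :
  (forall i, i \in l2 -> nodep i F) -> (forall i, i \in l1 -> nodep i G) ->
  integs (l1 ++ l2) (fun w => F w * G w) =
  (fun w => integs l1 F w * integs l2 G w).
Proof.
move=> hF hG; rewrite integs_cat integs_mull //.
by rewrite integs_mulr // => i /hG /(nodep_integs l2).
Qed.

Lemma integs_le l F G : (forall w, F w <= G w) -> forall w, integs l F w <= integs l G w.
Proof.
elim: l => //= i l IH /IH hFG w.
by apply: ler_sum => st _; apply: ler_wpM2l.
Qed.

Lemma integs_ge0 l F : (forall w, 0 <= F w) -> forall w, 0 <= integs l F w.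
Proof.
move=> hF w; have := @integs_le l (fun _ => 0) F hF w.
by rewrite integs_nodep.
Qed.

Lemma le_expect F G : (forall w, F w <= G w) -> expect F <= expect G.
Proof.
by move=> hFG; apply: ler_sum => w _; apply: ler_wpM2l => //; apply: prodr_ge0.
Qed.

Lemma expect_prod (f : I -> S -> R) :
  expect (fun w => \prod_i f i (w i)) = \prod_i \sum_st mu i st * f i st.
Proof. by rewrite bigA_distr_bigA; apply: eq_bigr => w _; rewrite -big_split. Qed.

Lemma expectZ c F : expect (fun w => c * F w) = c * expect F.
Proof. by rewrite /expect mulr_sumr; apply: eq_bigr => w _; rewrite mulrCA. Qed.

Variables (s0 : S) (v0 : R).
Hypothesis mu_s0 : forall i, mu i s0 = v0.

Lemma integs_all_s0 l : uniq l ->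
  integs l (fun w => indic (all (fun i => w i == s0) l)) = (fun _ => v0 ^+ size l).
Proof.
elim: l => [_|i l IH /= /andP[il ul]]; first by apply: funext => w; rewrite expr0.
have -> : (fun w : conf => indic ((w i == s0) && all (fun i => w i == s0) l) : R) =
          (fun w => indic (w i == s0) * indic (all (fun i => w i == s0) l)).
  by apply: funext => w; rewrite indic_and.
rewrite integs_mull => [|j jl w st]; last first.
  by rewrite updE; case: (eqVneq i j) => [ij|//]; move: il; rewrite ij jl.
rewrite IH //; apply: funext => w; rewrite /integ (bigD1 s0) //= big1 => [|st nst].
  by rewrite updE !eqxx /indic mu_s0 addr0 exprS; ring.
by rewrite updE eqxx /= (negbTE nst) /indic mul0r mulr0.
Qed.

End ProductMeasure.

(** * Sequences of lines without two consecutive empty lines *)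

(* [prev] records whether the line preceding [cs] is empty. *)
Fixpoint gapfree {T : Type} (e : pred T) (prev : bool) (cs : seq T) : bool :=
  if cs is c :: cs' then ~~ (prev && e c) && gapfree e (e c) cs' else true.

Lemma gapfree_prev {T : Type} (e : pred T) cs : gapfree e true cs -> gapfree e false cs.
Proof. by case: cs => //= c cs /andP[]. Qed.

Lemma eq_in_gapfree {T : eqType} (e1 e2 : pred T) prev (cs : seq T) :
  {in cs, e1 =1 e2} -> gapfree e1 prev cs = gapfree e2 prev cs.
Proof.
elim: cs prev => //= c cs IH prev e12.
by rewrite e12 ?mem_head // IH // => c' c'cs; rewrite e12 // inE c'cs orbT.
Qed.

Lemma not_gapfree {T : Type} (e : pred T) (cs : seq T) : ~~ gapfree e false cs ->
  exists cs1 c1 c2 cs2, cs = cs1 ++ [:: c1, c2 & cs2] /\ e c1 && e c2.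
Proof.
case: cs => //= c cs; elim: cs c => //= c' cs IH c.
rewrite negb_and negbK => /orP[e12|/IH[cs1 [c1 [c2 [cs2 [-> e12]]]]]].
  by exists [::], c, c', cs.
by exists (c :: cs1), c1, c2, cs2.
Qed.

Lemma iota_consecutive (cs1 cs2 : seq nat) x y m n :
  cs1 ++ [:: x, y & cs2] = iota m n -> y = x.+1.
Proof.
move=> e; have sz : ((size cs1).+1 < n)%N.
  by rewrite -(size_iota m n) -e size_cat /=; lia.
have := congr1 (nth 0%N ^~ (size cs1)) e; have := congr1 (nth 0%N ^~ (size cs1).+1) e.
rewrite !nth_cat ltnn subnn ltnNge leqnSn subSnn /= !nth_iota //; first lia.
exact: ltnW.
Qed.

Section GapBound.
Variables (R : realType) (G u : R).
Hypotheses (G_ge0 : 0 <= G) (u_ge0 : 0 <= u) (u_le1 : u <= 1).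
Hypothesis lam_quad : expR (- G) ^+ 2 = u * expR (- G) + u * (1 - u).

Local Notation lam := (expR (- G)).
Local Notation pw m := (expR (- G * m)).

Lemma pw_succ (m : R) : pw (m + 1) = lam * pw m.
Proof. by rewrite mulrDr mulr1 expRD mulrC. Qed.

Lemma lam_le1 : lam <= 1.
Proof. by rewrite -expR0 ler_expR oppr_le0. Qed.

(* [A] and [B] bound the probabilities that a sequence of lines is gap-free,
   given that the preceding line is respectively non-empty and empty; [m] is
   the length of the sequence minus twice the number of blocked lines. *)
Definition gap_bound (A B m : R) :=
  lam * A <= pw m /\ (1 - u) * B + u * A <= pw m.

Lemma gap_bound_nil : gap_bound 1 1 0.
Proof. by rewrite /gap_bound mulr0 expR0 mulr1; split; [apply: lam_le1 | rewrite !mulr1 subrK]. Qed.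

Lemma gap_bound_le (A B m : R) : gap_bound A B m -> A <= pw (m - 1).
Proof.
case=> hA _; rewrite -(ler_pM2l (expR_gt0 (- G))) -pw_succ.
by rewrite subrK.
Qed.

Lemma gap_bound_blocked (A B m : R) : gap_bound A B m -> gap_bound A A (m - 1).
Proof.
move=> hAB; split; last by have := gap_bound_le hAB; lra.
apply: le_trans hAB.1 _.
by rewrite ler_expR (_ : - G * (m - 1) = - G * m + G) ?lerDl //; ring.
Qed.

Lemma gap_bound_open (A B m v : R) : 1 - u <= v <= 1 -> 0 <= B <= A ->
  gap_bound A B m -> gap_bound (v * B + (1 - v) * A) ((1 - v) * A) (m + 1).
Proof.
move=> /andP[v_ge v_le1] /andP[B_ge0 BA] [hA hAB]; rewrite /gap_bound pw_succ.
have lam_gt0 := expR_gt0 (- G).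
have u_le1' : 0 <= 1 - u by rewrite subr_ge0.
have u0 := u_ge0.
have v_excess : 0 <= v - (1 - u) by lra.
have mix : v * B + (1 - v) * A <= (1 - u) * B + u * A.
  by have := @mulr_ge0 _ _ (A - B) v_excess; nra.
split; first by rewrite ler_pM2l //; apply: le_trans hAB.
have mix2 : (1 - u) * ((1 - v) * A) + u * (v * B + (1 - v) * A)
            <= u * ((1 - u) * B + u * A) + u * (1 - u) * A.
  have AuB : 0 <= A - u * B by have := mulr_ge0 u_le1' B_ge0; nra.
  by have := mulr_ge0 v_excess AuB; nra.
rewrite -(ler_pM2l lam_gt0); apply: le_trans (ler_wpM2l (ltW lam_gt0) mix2) _.
(* the quadratic relation for [lam] closes the recursion *)
rewrite mulrA -expr2 lam_quad.
have := ler_wpM2l (mulr_ge0 u_ge0 (ltW lam_gt0)) hAB.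
have := ler_wpM2l (mulr_ge0 u_ge0 u_le1') hA.
lra.
Qed.
End GapBound.

Lemma leq_sum_comp_inj (T T' : finType) (f : T -> T') (F : T' -> nat) :
  injective f -> (\sum_y F (f y) <= \sum_x F x)%N.
Proof.
move=> f_inj; rewrite [leqRHS](bigID [in f @: [set: T]]) /=.
rewrite (big_imset _ (in2W f_inj)) /=.
by rewrite (eq_bigl (fun y => y \in [set: T])) ?leq_addr // => y; rewrite inE.
Qed.

Section Lines.
Variables (R : realType) (I S : finType) (mu : I -> S -> R).
Hypothesis mu_ge0 : forall i st, 0 <= mu i st.
Hypothesis mu_sum : forall i, \sum_st mu i st = 1.
Variables (s0 : S) (v0 : R).
Hypothesis mu_s0 : forall i, mu i s0 = v0.
Variables (C J : finType) (site : C -> J -> I) (cross : pred J).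
Hypothesis site_inj : forall c c' j j', site c j = site c' j' -> c = c' /\ j = j'.

Local Notation conf := {ffun I -> S}.
Local Notation integs := (integs mu).
Implicit Types (w : conf) (c : C) (cs : seq C) (i : I) (j : J).

(* Line [c] consists of the sites [site c j]; those with [cross j] are its
   corner sites, the others form [inner c] and lie on no other line. *)
Definition inner c : seq I := [seq site c j | j in predC cross].
Definition inners cs : seq I := flatten [seq inner c | c <- cs].
Definition line_empty c w := [forall j, w (site c j) == s0].
Definition cross_empty c w := [forall j, cross j ==> (w (site c j) == s0)].
Definition gapfree_indic prev cs w : R := indic (gapfree (line_empty^~ w) prev cs).

Lemma mem_innerP c i : reflect (exists2 j, ~~ cross j & i = site c j) (i \in inner c).
Proof. by apply: (iffP imageP) => -[j hj ->]; exists j. Qed.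

Lemma uniq_inner c : uniq (inner c).
Proof.
by rewrite map_inj_uniq ?enum_uniq // => j j' /site_inj[_ ->].
Qed.

Lemma size_inner c : size (inner c) = #|predC cross|.
Proof. exact: size_image. Qed.

Lemma line_emptyE c w :
  line_empty c w = cross_empty c w && all (fun i => w i == s0) (inner c).
Proof.
apply/forallP/andP => [h|[/forallP hc /allP hi] j].
  split; first by apply/forallP => j; apply/implyP => _; apply: h.
  by apply/allP => i /mem_innerP[j _ ->]; apply: h.
case cj: (cross j); first exact: (implyP (hc j)).
by apply: hi; apply/mem_innerP; exists j; rewrite ?cj.
Qed.

Lemma nodep_cross_empty c c' i : i \in inner c' -> nodep i (cross_empty c).
Proof.
move=> /mem_innerP[j' nj' ->] w st; apply: eq_forallb => j; rewrite updE.
by case: (eqVneq (site c j) (site c' j')) => [/site_inj[_ ->]|//]; rewrite (negbTE nj').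
Qed.

Lemma nodep_line_empty c c' i : c' != c -> i \in inner c' -> nodep i (line_empty c).
Proof.
move=> nc /mem_innerP[j' _ ->] w st; apply: eq_forallb => j; rewrite updE.
by case: (eqVneq (site c j) (site c' j')) => [/site_inj[ec _]|//]; rewrite ec eqxx in nc.
Qed.

Lemma mem_innersP cs i :
  reflect (exists c j, [/\ c \in cs, ~~ cross j & i = site c j]) (i \in inners cs).
Proof.
apply: (iffP flatten_mapP) => [[c cc /mem_innerP[j cj ->]]|[c [j [cc cj ->]]]].
  by exists c, j.
by exists c => //; apply/mem_innerP; exists j.
Qed.

Lemma nodep_gapfree_indic prev cs i :
  (forall c j, c \in cs -> site c j != i) -> nodep i (gapfree_indic prev cs).
Proof.
move=> off w st; congr indic; apply: eq_in_gapfree => c cc /=.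
by apply: eq_forallb => j; rewrite updE (negbTE (off c j cc)).
Qed.

Lemma integs_line_empty c :
  integs (inner c) (fun w => indic (line_empty c w)) =
  (fun w => indic (cross_empty c w) * v0 ^+ #|predC cross|).
Proof.
have -> : (fun w => indic (line_empty c w) : R) =
    (fun w => indic (cross_empty c w) * indic (all (fun i => w i == s0) (inner c))).
  by apply: funext => w; rewrite line_emptyE indic_and.
rewrite integs_mull => [|i /nodep_cross_empty h w st]; last by rewrite h.
by rewrite (integs_all_s0 mu_s0) ?uniq_inner // size_inner.
Qed.

Lemma integs_gapfree_cons prev c cs : c \notin cs ->
  integs (inners (c :: cs)) (gapfree_indic prev (c :: cs)) =
  (fun w => let eps := indic (cross_empty c w) * v0 ^+ #|predC cross| in
     indic (~~ prev) * eps * integs (inners cs) (gapfree_indic true cs) w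
     + (1 - eps) * integs (inners cs) (gapfree_indic false cs) w).
Proof.
move=> ncs; set E := fun w => indic (line_empty c w) : R.
have E_nodep i : i \in inners cs -> nodep i E.
  case/flatten_mapP => c' c'cs hi w st.
  by rewrite /E (nodep_line_empty _ hi) //; apply: contraNneq ncs => <-.
have gapfree_nodep prev' i : i \in inner c ->
    nodep i (integs (inners cs) (gapfree_indic prev' cs)).
  move=> /mem_innerP[j _ ->]; apply/nodep_integs/nodep_gapfree_indic => c' j' c'cs.
  by apply: contraNneq ncs => /site_inj[<- _].
have -> : gapfree_indic prev (c :: cs) = (fun w =>
    indic (~~ prev) * E w * gapfree_indic true cs w + (1 - E w) * gapfree_indic false cs w).
  apply: funext => w; rewrite /gapfree_indic /E /=.
  by case: (line_empty c w); case: prev; rewrite /indic /=; ring.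
rewrite /inners /= -/(inners cs) integs_cat integs_add.
rewrite integs_mull => [|i /E_nodep hE w st]; last by rewrite hE.
rewrite integs_mull => [|i /E_nodep hE w st]; last by rewrite hE.
rewrite integs_add (integs_mulr mu _ (gapfree_nodep true)).
rewrite (integs_mulr mu _ (gapfree_nodep false)).
have hE : integs (inner c) E =
    (fun w => indic (cross_empty c w) * v0 ^+ #|predC cross|) := integs_line_empty c.
by rewrite integsZ (integs_subl mu_sum) hE; apply: funext => w /=; ring.
Qed.

Lemma integs_gapfree_ge0 prev cs w : 0 <= integs (inners cs) (gapfree_indic prev cs) w.
Proof. by apply: (integs_ge0 mu_ge0 mu_sum) => w'; apply: indic_ge0. Qed.

Lemma integs_gapfree_prev cs w :
  integs (inners cs) (gapfree_indic true cs) w <=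
  integs (inners cs) (gapfree_indic false cs) w.
Proof. by apply: (integs_le mu_ge0) => w'; apply/indic_le/gapfree_prev. Qed.

Definition blocked cs w : nat := count (fun c => ~~ cross_empty c w) cs.

Lemma blocked_le_occupied (A : pred I) cs w : uniq cs ->
  (forall c j, c \in cs -> cross j -> A (site c j)) ->
  (blocked cs w <= \sum_x (A x && (w x != s0)))%N.
Proof.
move=> ucs hA; set occ := fun x => A x && (w x != s0).
have blocked_occ c : c \in cs -> (~~ cross_empty c w <= \sum_j occ (site c j))%N.
  move=> cc; case: (boolP (cross_empty c w)) => //= /forallPn[j].
  by rewrite negb_imply => /andP[cj wj]; rewrite (bigD1 j) //= /occ hA ?wj.
apply: (@leq_trans (\sum_(c <- cs) \sum_j occ (site c j))).
  rewrite /blocked -sum1_count big_mkcond /= big_seq [leqRHS]big_seq.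
  by apply: leq_sum => c /blocked_occ; case: (~~ cross_empty c w).
rewrite big_uniq // pair_big /=.
apply: leq_trans (leq_sum_comp_inj occ (f := fun y : C * J => site y.1 y.2) _).
  by rewrite [leqLHS]big_mkcond; apply: leq_sum => y _; case: ifP.
by move=> [c j] [c' j'] /= /site_inj[-> ->].
Qed.

Variables (G u : R).
Hypotheses (G_ge0 : 0 <= G) (u_ge0 : 0 <= u) (u_le1 : u <= 1).
Hypothesis lam_quad : expR (- G) ^+ 2 = u * expR (- G) + u * (1 - u).
Hypothesis vline_ge : 1 - u <= v0 ^+ #|predC cross|.
Hypothesis vline_le1 : v0 ^+ #|predC cross| <= 1.

Lemma gap_bound_gapfree cs w : uniq cs ->
  gap_bound G u (integs (inners cs) (gapfree_indic false cs) w)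
    (integs (inners cs) (gapfree_indic true cs) w)
    ((size cs)%:R - 2 * (blocked cs w)%:R).
Proof.
elim: cs => [_|c cs IH ucs].
  by rewrite /gapfree_indic /indic /= mulr0 subr0; apply: gap_bound_nil.
case/andP: ucs => ncs /IH hAB.
rewrite !integs_gapfree_cons //= /blocked /= -/(blocked cs w).
have := integs_gapfree_ge0 true cs w; have := integs_gapfree_prev cs w.
case: (cross_empty c w) => /= BA B_ge0; rewrite /indic /= ?(mul0r, mul1r, add0r, subr0).
  rewrite (_ : (size cs).+1%:R - 2 * (blocked cs w)%:R =
               (size cs)%:R - 2 * (blocked cs w)%:R + 1); last first.
    by rewrite -addn1 natrD; ring.
  by apply: gap_bound_open => //; apply/andP.
rewrite (_ : (size cs).+1%:R - 2 * (1 + blocked cs w)%:R =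
             (size cs)%:R - 2 * (blocked cs w)%:R - 1); last first.
  by rewrite -addn1 addnC !natrD; ring.
exact: gap_bound_blocked hAB.
Qed.

Lemma integs_gapfree_le cs w : uniq cs ->
  integs (inners cs) (gapfree_indic false cs) w <=
  expR (- G * ((size cs)%:R - 2 * (blocked cs w)%:R - 1)).
Proof. by move=> ucs; apply: gap_bound_le (gap_bound_gapfree w ucs). Qed.
End Lines.

(** * The margin strips of the window *)

Definition strip N m n : seq 'I_N := [seq i : 'I_N <- enum 'I_N | (m <= i < m + n)%N].

Lemma mem_strip N m n (i : 'I_N) : (i \in strip N m n) = (m <= i < m + n)%N.
Proof. by rewrite mem_filter mem_enum andbT. Qed.

Lemma map_val_strip N m n : (m + n <= N)%N -> map val (strip N m n) = iota m n.
Proof.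
move=> mnN; rewrite /strip -(filter_map val (fun k => m <= k < m + n)%N) val_enum_ord.
have -> : N = (m + (n + (N - m - n)))%N by lia.
rewrite !iotaD !filter_cat add0n.
rewrite (@eq_in_filter _ _ pred0 (iota 0 m)) => [|k]; last by rewrite mem_iota /=; lia.
rewrite (@eq_in_filter _ _ predT (iota m n)) => [|k]; last by rewrite mem_iota /=; lia.
rewrite (@eq_in_filter _ _ pred0 (iota (m + n) _)) => [|k]; last by rewrite mem_iota /=; lia.
by rewrite !filter_pred0 filter_predT cats0.
Qed.

Lemma size_strip N m n : (m + n <= N)%N -> size (strip N m n) = n.
Proof. by move=> mnN; rewrite -(size_map val) map_val_strip // size_iota. Qed.

Lemma card_strip N m n : (m + n <= N)%N -> #|[pred i : 'I_N | m <= i < m + n]%N| = n.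
Proof. by move=> mnN; rewrite -[in RHS](size_strip mnN) cardE /enum_mem -enumT. Qed.

Lemma card_outside_strip N m n (P : pred 'I_N) : (m + n <= N)%N ->
  P =1 (fun i => ~~ (m <= i < m + n)%N) -> #|P| = (N - n)%N.
Proof.
move=> mnN hP; have := cardC P.
rewrite card_ord (_ : #|[predC P]| = n) => [e|]; first by rewrite -[in RHS]e addnK.
by rewrite -(card_strip mnN); apply: eq_card => i; rewrite !inE unfold_in hP negbK.
Qed.

Lemma uniq_strip N m n : uniq (strip N m n).
Proof. by rewrite filter_uniq ?enum_uniq. Qed.

Lemma not_gapfree_strip N m n (e : pred 'I_N) : (m + n <= N)%N ->
  ~~ gapfree e false (strip N m n) ->
  exists i i' : 'I_N, [/\ (m <= i)%N, (i' < m + n)%N, i' = i.+1 :> nat, e i & e i'].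
Proof.
move=> mnN /not_gapfree[cs1 [i [i' [cs2 [def_cs /andP[ei ei']]]]]].
have /iota_consecutive ii' : map val cs1 ++ [:: val i, val i' & map val cs2] = iota m n.
  by rewrite -(map_val_strip mnN) def_cs map_cat.
have : i \in strip N m n by rewrite def_cs mem_cat mem_head orbT.
have : i' \in strip N m n by rewrite def_cs mem_cat !inE eqxx !orbT.
by rewrite !mem_strip => /andP[_ hi'] /andP[hi _]; exists i, i'.
Qed.

Lemma extend_wsite (Q : rect) (w : {ffun 'I_(winW Q) * 'I_(winH Q) -> state}) x :
  extend w (wsite x) = w x.
Proof.
rewrite /extend; case: pickP => [x' /eqP e | /(_ x)]; last by rewrite eqxx.
congr (w _); move: e; case: x' => i' j'; case: x => i j; rewrite /wsite /= => -[e1 e2].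
by congr pair; apply: ord_inj; lia.
Qed.

Lemma sum_nat_of_bool (T : finType) (P : pred T) : (\sum_x P x)%N = #|P|.
Proof.
by rewrite -sum1_card [RHS]big_mkcond; apply: eq_bigr => x _; rewrite unfold_in; case: (P x).
Qed.

Lemma sum_state (R : realType) (f : state -> R) : \sum_st f st = f None + f (Some true) + f (Some false).
Proof.
rewrite (bigD1 None) // (bigD1 (Some true)) // (bigD1 (Some false)) //= big_pred0 ?addr0 ?addrA //.
by case=> [[]|].
Qed.

Section Window.
Variables (R : realType) (p : R) (Q Rr : rect) (s1 a s2 t1 b t2 : nat).
Local Notation W := (winW Q).
Local Notation H := (winH Q).
Hypotheses (hW : W = (s1 + a + s2)%N) (hH : H = (t1 + b + t2)%N).
Hypotheses (hQx : rx2 Q = rx1 Q + W%:Z - 1) (hQy : ry2 Q = ry1 Q + H%:Z - 1).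
Hypotheses (hx1 : rx1 Rr = rx1 Q + s1%:Z) (hx2 : rx2 Rr = rx1 Q + (s1 + a)%N%:Z - 1).
Hypotheses (hy1 : ry1 Rr = ry1 Q + t1%:Z) (hy2 : ry2 Rr = ry1 Q + (t1 + b)%N%:Z - 1).

Local Notation site := ('I_W * 'I_H)%type.
Local Notation conf := {ffun site -> state}.
Implicit Types (w : conf) (x : site).

Definition side_col (i : 'I_W) := ~~ (s1 <= i < s1 + a)%N.
Definition side_row (j : 'I_H) := ~~ (t1 <= j < t1 + b)%N.
Definition corner x := side_col x.1 && side_row x.2.

Definition col_site (c : 'I_W) (j : 'I_H) : site := (c, j).
Definition row_site (c : 'I_H) (i : 'I_W) : site := (i, c).

Lemma col_site_inj c c' j j' : col_site c j = col_site c' j' -> c = c' /\ j = j'.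
Proof. by case. Qed.

Lemma row_site_inj c c' i i' : row_site c i = row_site c' i' -> c = c' /\ i = i'.
Proof. by case. Qed.

Lemma col_empty_line c w : line_empty Empty col_site c w ->
  col_empty (extend w) (rx1 Q + (c : nat)%:Z) (ry1 Q) (ry2 Q).
Proof.
move=> /forallP e y /andP[y1 y2]; have hj : (`|y - ry1 Q| < H)%N by lia.
have -> : (rx1 Q + (c : nat)%:Z, y) = wsite (c, Ordinal hj) by rewrite /wsite /=; congr pair; lia.
by rewrite extend_wsite; apply/eqP/e.
Qed.

Lemma row_empty_line c w : line_empty Empty row_site c w ->
  row_empty (extend w) (rx1 Q) (rx2 Q) (ry1 Q + (c : nat)%:Z).
Proof.
move=> /forallP e x /andP[x1 x2]; have hi : (`|x - rx1 Q| < W)%N by lia.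
have -> : (x, ry1 Q + (c : nat)%:Z) = wsite (Ordinal hi, c) by rewrite /wsite /=; congr pair; lia.
by rewrite extend_wsite; apply/eqP/e.
Qed.

Lemma gapfree_cols m n (x1 x2 : int) w : (m + n <= W)%N ->
  x1 = rx1 Q + m%:Z -> x2 = rx1 Q + (m + n)%N%:Z - 1 ->
  no_dgap_cols (extend w) x1 x2 (ry1 Q) (ry2 Q) ->
  gapfree (line_empty Empty col_site ^~ w) false (strip W m n).
Proof.
move=> mnW -> -> nd; apply/negPn/negP => /(not_gapfree_strip mnW) [i [i' [mi i'n ii' ei ei']]].
apply: nd; exists (rx1 Q + (i : nat)%:Z); split; [lia | lia | exact: col_empty_line |].
by rewrite (_ : _ + 1 = rx1 Q + (i' : nat)%:Z); [exact: col_empty_line | lia].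
Qed.

Lemma gapfree_rows m n (y1 y2 : int) w : (m + n <= H)%N ->
  y1 = ry1 Q + m%:Z -> y2 = ry1 Q + (m + n)%N%:Z - 1 ->
  no_dgap_rows (extend w) (rx1 Q) (rx2 Q) y1 y2 ->
  gapfree (line_empty Empty row_site ^~ w) false (strip H m n).
Proof.
move=> mnH -> -> nd; apply/negPn/negP => /(not_gapfree_strip mnH) [j [j' [mj j'n jj' ej ej']]].
apply: nd; exists (ry1 Q + (j : nat)%:Z); split; [lia | lia | exact: row_empty_line |].
by rewrite (_ : _ + 1 = ry1 Q + (j' : nat)%:Z); [exact: row_empty_line | lia].
Qed.

Local Notation stripL := (strip W 0 s1).
Local Notation stripR := (strip W (s1 + a) s2).
Local Notation stripB := (strip H 0 t1).
Local Notation stripT := (strip H (t1 + b) t2).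
Local Notation colF cs := (gapfree_indic R Empty col_site false cs).
Local Notation rowF cs := (gapfree_indic R Empty row_site false cs).
Local Notation colI cs := (inners col_site side_row cs).
Local Notation rowI cs := (inners row_site side_col cs).

Lemma indic_Dev_le w : indic `[< Dev Rr Q (extend w) >] <=
  colF stripL w * (colF stripR w * (rowF stripB w * rowF stripT w)).
Proof.
case: asboolP => [[hL hR hB hT]|_]; last first.
  by rewrite {1}/indic; do 3 (apply: mulr_ge0; first exact: indic_ge0); apply: indic_ge0.
rewrite /gapfree_indic (gapfree_cols (m := 0) (n := s1) _ _ _ hL); try lia.
rewrite (gapfree_cols (m := s1 + a) (n := s2) _ _ _ hR); try lia.
rewrite (gapfree_rows (m := 0) (n := t1) _ _ _ hB); try lia.
rewrite (gapfree_rows (m := t1 + b) (n := t2) _ _ _ hT); try lia.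
by rewrite /indic /= !mulr1.
Qed.

Lemma mem_colI m n x : x \in colI (strip W m n) -> (m <= x.1 < m + n)%N && ~~ side_row x.2.
Proof. by case/mem_innersP => c [j [cc cj ->]]; rewrite -mem_strip cc. Qed.

Lemma mem_rowI m n x : x \in rowI (strip H m n) -> (m <= x.2 < m + n)%N && ~~ side_col x.1.
Proof. by case/mem_innersP => c [i [cc ci ->]]; rewrite -mem_strip cc. Qed.

Lemma nodep_colF m n x : ~~ (m <= x.1 < m + n)%N -> nodep x (colF (strip W m n)).
Proof.
move=> hx; apply: (nodep_gapfree_indic R Empty) => c j; rewrite mem_strip => hc.
by apply: contraNneq hx => <-.
Qed.

Lemma nodep_rowF m n x : ~~ (m <= x.2 < m + n)%N -> nodep x (rowF (strip H m n)).
Proof.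
move=> hx; apply: (nodep_gapfree_indic R Empty) => c i; rewrite mem_strip => hc.
by apply: contraNneq hx => <-.
Qed.

Definition site_mu x st : R := site_law p (wsite x) st.

(* The sites integrated out for one strip lie on no line of the other three. *)
Lemma integs_Dev_factor :
  integs site_mu (colI stripL ++ (colI stripR ++ (rowI stripB ++ rowI stripT)))
    (fun w => colF stripL w * (colF stripR w * (rowF stripB w * rowF stripT w))) =
  (fun w => integs site_mu (colI stripL) (colF stripL) w *
     (integs site_mu (colI stripR) (colF stripR) w *
      (integs site_mu (rowI stripB) (rowF stripB) w *
       integs site_mu (rowI stripT) (rowF stripT) w))).
Proof.
rewrite !(integs_cat_mul site_mu) // => x;
  rewrite ?mem_cat => hx; repeat case/orP: hx => hx;
  first [move/mem_colI: hx | move/mem_rowI: hx];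
  rewrite /side_row /side_col ?negbK => /andP[h1 h2];
  repeat apply: nodepM; first [apply: nodep_colF | apply: nodep_rowF]; lia.
Qed.

Hypothesis p01 : 0 < p < 1.

Lemma site_mu_ge0 x st : 0 <= site_mu x st.
Proof. by case/andP: p01 => p0 p1; rewrite /site_mu /site_law; case: ifP => _; case: st => [[]|]; lra. Qed.

Lemma site_mu_sum x : \sum_st site_mu x st = 1.
Proof. by rewrite sum_state /site_mu /site_law; case: ifP => _ /=; ring. Qed.

Lemma site_mu_empty x : site_mu x Empty = 1 - p.
Proof. by rewrite /site_mu /site_law; case: ifP. Qed.

Lemma site_mu_occupied x : site_mu x (Some true) + site_mu x (Some false) = p.
Proof. by rewrite /site_mu /site_law; case: ifP => _ /=; ring. Qed.

Lemma card_inner_cols : #|predC side_row| = b.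
Proof.
rewrite -[RHS](@card_strip H t1 b); last by rewrite hH leq_addr.
by apply: eq_card => j; rewrite !inE /side_row negbK.
Qed.

Lemma card_inner_rows : #|predC side_col| = a.
Proof.
rewrite -[RHS](@card_strip W s1 a); last by rewrite hW leq_addr.
by apply: eq_card => i; rewrite !inE /side_col negbK.
Qed.

Variables (Ga Gb ua ub : R).
Hypotheses (Ga_ge0 : 0 <= Ga) (ua_ge0 : 0 <= ua) (ua_le1 : ua <= 1).
Hypothesis quad_a : expR (- Ga) ^+ 2 = ua * expR (- Ga) + ua * (1 - ua).
Hypothesis empty_a : 1 - ua = (1 - p) ^+ a.
Hypotheses (Gb_ge0 : 0 <= Gb) (ub_ge0 : 0 <= ub) (ub_le1 : ub <= 1).
Hypothesis quad_b : expR (- Gb) ^+ 2 = ub * expR (- Gb) + ub * (1 - ub).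
Hypothesis empty_b : 1 - ub = (1 - p) ^+ b.

Local Notation blockedC cs w := (blocked Empty col_site side_row cs w).
Local Notation blockedR cs w := (blocked Empty row_site side_col cs w).

Lemma integs_colF_le m n w : (m + n <= W)%N ->
  integs site_mu (colI (strip W m n)) (colF (strip W m n)) w <=
  expR (- Gb * (n%:R - 2 * (blockedC (strip W m n) w)%:R - 1)).
Proof.
move=> mnW; rewrite -[in n%:R](size_strip mnW).
have [p0 p1] := andP p01.
have vline_ge : 1 - ub <= (1 - p) ^+ #|predC side_row| by rewrite card_inner_cols empty_b.
have vline_le1 : (1 - p) ^+ #|predC side_row| <= 1 by rewrite exprn_ile1 //; lra.
exact: (integs_gapfree_le site_mu_ge0 site_mu_sum site_mu_empty col_site_inj
          Gb_ge0 ub_ge0 ub_le1 quad_b vline_ge vline_le1 w (uniq_strip _ _ _)).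
Qed.

Lemma integs_rowF_le m n w : (m + n <= H)%N ->
  integs site_mu (rowI (strip H m n)) (rowF (strip H m n)) w <=
  expR (- Ga * (n%:R - 2 * (blockedR (strip H m n) w)%:R - 1)).
Proof.
move=> mnH; rewrite -[in n%:R](size_strip mnH).
have [p0 p1] := andP p01.
have vline_ge : 1 - ua <= (1 - p) ^+ #|predC side_col| by rewrite card_inner_rows empty_a.
have vline_le1 : (1 - p) ^+ #|predC side_col| <= 1 by rewrite exprn_ile1 //; lra.
exact: (integs_gapfree_le site_mu_ge0 site_mu_sum site_mu_empty row_site_inj
          Ga_ge0 ua_ge0 ua_le1 quad_a vline_ge vline_le1 w (uniq_strip _ _ _)).
Qed.

Definition occupied_corners w : nat := \sum_x (corner x && (w x != Empty)).

Lemma blocked_cols_le w :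
  (blockedC stripL w + blockedC stripR w <= occupied_corners w)%N.
Proof.
rewrite /blocked -count_cat; apply: (blocked_le_occupied _ col_site_inj) => [|c j].
  rewrite cat_uniq !uniq_strip /= andbT; apply/hasPn => i.
  by rewrite !mem_strip /= => h1; apply/negP; lia.
by rewrite mem_cat !mem_strip /corner /side_col /= => hc ->; rewrite andbT; lia.
Qed.

Lemma blocked_rows_le w :
  (blockedR stripB w + blockedR stripT w <= occupied_corners w)%N.
Proof.
rewrite /blocked -count_cat; apply: (blocked_le_occupied _ row_site_inj) => [|c i].
  rewrite cat_uniq !uniq_strip /= andbT; apply/hasPn => j.
  by rewrite !mem_strip /= => h1; apply/negP; lia.
by rewrite mem_cat !mem_strip /corner /side_row /= => hc ->; lia.
Qed.

Lemma gapfree_product_le w :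
  integs site_mu (colI stripL) (colF stripL) w *
    (integs site_mu (colI stripR) (colF stripR) w *
     (integs site_mu (rowI stripB) (rowF stripB) w *
      integs site_mu (rowI stripT) (rowF stripT) w)) <=
  expR (- Gb * ((s1 + s2)%:R - 2) - Ga * ((t1 + t2)%:R - 2)) *
  expR (2 * (Gb + Ga) * (occupied_corners w)%:R).
Proof.
set IL := integs _ (colI stripL) _ w; set IR := integs _ (colI stripR) _ w.
set IB := integs _ (rowI stripB) _ w; set IT := integs _ (rowI stripT) _ w.
have [IL0 IR0 IB0 IT0] : [/\ 0 <= IL, 0 <= IR, 0 <= IB & 0 <= IT].
  by split; apply: (integs_ge0 site_mu_ge0 site_mu_sum) => w'; apply: indic_ge0.
have hL := @integs_colF_le 0 s1 w ltac:(by rewrite hW add0n -addnA leq_addr).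
have hR := @integs_colF_le (s1 + a) s2 w ltac:(by rewrite hW).
have hB := @integs_rowF_le 0 t1 w ltac:(by rewrite hH add0n -addnA leq_addr).
have hT := @integs_rowF_le (t1 + b) t2 w ltac:(by rewrite hH).
apply: le_trans (ler_pM IL0 _ hL (ler_pM IR0 _ hR (ler_pM IB0 IT0 hB hT))) _;
  rewrite ?mulr_ge0 //.
rewrite -!expRD ler_expR.
have hLR := blocked_cols_le w; have hBT := blocked_rows_le w.
rewrite -(ler_nat R) natrD in hLR; rewrite -(ler_nat R) natrD in hBT.
move: hLR hBT.
set N := (occupied_corners w)%:R; set kL := (blockedC stripL w)%:R.
set kR := (blockedC stripR w)%:R; set kB := (blockedR stripB w)%:R.
set kT := (blockedR stripT w)%:R => hLR hBT.
have eb : 0 <= Gb * (N - (kL + kR)) by rewrite mulr_ge0 // subr_ge0.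
have ea : 0 <= Ga * (N - (kB + kT)) by rewrite mulr_ge0 // subr_ge0.
rewrite !natrD; lra.
Qed.

Lemma card_corners : (\sum_x corner x = (s1 + s2) * (t1 + t2))%N.
Proof.
rewrite -(pair_big predT predT (fun i j => nat_of_bool (side_col i && side_row j))) /=.
rewrite (eq_bigr (fun i => side_col i * \sum_j side_row j)%N) => [|i _]; last first.
  by rewrite big_distrr; apply: eq_bigr => j _; case: (side_col i); case: (side_row j).
rewrite -big_distrl !sum_nat_of_bool /=.
rewrite (@card_outside_strip _ s1 a) ?(@card_outside_strip _ t1 b) ?hW ?hH ?leq_addr //.
by rewrite (addnAC s1) (addnAC t1) !addnK.
Qed.

Lemma expect_exp_occupied (k : R) : 0 <= k ->
  expect site_mu (fun w => expR (k * (occupied_corners w)%:R)) <=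
  expR (p * (expR k - 1) * ((s1 + s2) * (t1 + t2))%:R).
Proof.
move=> k0; have [p0 p1] := andP p01.
have -> : (fun w => expR (k * (occupied_corners w)%:R)) =
    (fun w => \prod_x expR (k * (corner x && (w x != Empty))%:R)).
  by apply: funext => w; rewrite /occupied_corners natr_sum mulr_sumr expR_sum.
rewrite (expect_prod _ (fun x st => expR (k * (corner x && (st != Empty))%:R))).
rewrite -card_corners natr_sum mulr_sumr expR_sum.
apply: ler_prod => x _; rewrite sum_state /=.
case: (corner x) => /=; rewrite ?mulr1 ?mulr0 ?expR0 ?mulr1.
- rewrite site_mu_empty -addrA -mulrDl site_mu_occupied.
  apply/andP; split; first by have := expR_ge0 k; nra.
  by have := expR_ge1Dx (p * (expR k - 1)); lra.
- by rewrite -(site_mu_sum x) sum_state lexx andbT !addr_ge0 ?site_mu_ge0.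
Qed.

Lemma Pp_Dev_le : Pp p Q (Dev Rr Q) <=
  expR (- Gb * ((s1 + s2)%:R - 2) - Ga * ((t1 + t2)%:R - 2)) *
  expR (p * (expR (2 * (Gb + Ga)) - 1) * ((s1 + s2) * (t1 + t2))%:R).
Proof.
have -> : Pp p Q (Dev Rr Q) = expect site_mu (fun w => indic `[< Dev Rr Q (extend w) >]) by [].
apply: le_trans (le_expect site_mu_ge0 indic_Dev_le) _.
rewrite -(expect_integs site_mu_sum (colI stripL ++ (colI stripR ++ (rowI stripB ++ rowI stripT)))).
rewrite integs_Dev_factor.
apply: le_trans (le_expect site_mu_ge0 gapfree_product_le) _.
rewrite expectZ ler_wpM2l ?expR_ge0 //.
by apply: expect_exp_occupied; rewrite mulr_ge0 ?addr_ge0.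
Qed.
End Window.

(** * The rate function g *)

(* [beta u] is the Perron root of the transfer matrix [[u, 1 - u], [u, 0]]. *)
Lemma beta_root (R : realType) (u : R) : 0 < u <= 1 ->
  [/\ 0 < beta u, beta u <= 1 & beta u ^+ 2 = u * beta u + u * (1 - u)].
Proof.
case/andP=> u0 u1.
have D0 : 0 <= u * (4 - 3 * u) by apply: mulr_ge0; lra.
set sq := Num.sqrt (u * (4 - 3 * u)).
have sq0 : 0 <= sq by apply: sqrtr_ge0.
have sq2 : sq ^+ 2 = u * (4 - 3 * u) by apply: sqr_sqrtr.
have sq_le : sq <= 2 - u by rewrite -ler_sqr ?nnegrE ?sq2; nra.
rewrite /beta -/sq; split; [nra | lra |].
transitivity ((u ^+ 2 + 2 * u * sq + sq ^+ 2) / 4); first by field.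
by rewrite sq2; field.
Qed.

Lemma gfun_params (R : realType) (p : R) n : 0 < p < 1 -> (0 < n)%N ->
  let G := gfun (n%:R * - ln (1 - p)) in let u := 1 - (1 - p) ^+ n in
  [/\ 0 <= G, 0 <= u, u <= 1 & expR (- G) ^+ 2 = u * expR (- G) + u * (1 - u)].
Proof.
move=> /andP[p0 p1] n0 G u.
have hv : expR (- (n%:R * - ln (1 - p))) = (1 - p) ^+ n.
  by rewrite mulrN opprK expRM_natl lnK // posrE; lra.
have v0 : 0 < (1 - p) ^+ n by apply: exprn_gt0; lra.
have v1 : (1 - p) ^+ n < 1 by rewrite exprn_ilt1 ?(gtn_eqF n0) //; lra.
have [b0 b1 b2] := @beta_root R u ltac:(apply/andP; split; rewrite /u; lra).
have eG : expR (- G) = beta u by rewrite /G /gfun hv opprK lnK // posrE.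
by rewrite eG; split => //; [rewrite /G /gfun hv oppr_ge0 ln_le0 | rewrite /u; lra | rewrite /u; lra].
Qed.

Lemma le_neg_ln1B (R : realType) (p : R) : p < 1 -> p <= - ln (1 - p).
Proof. by move=> p1; rewrite lerNr; have := @le_ln1Dx R (- p); lra. Qed.

Lemma exponent_le (R : realType) (p q Ga Gb : R) (s t : nat) :
  0 < p -> p <= q -> 0 <= Ga -> 0 <= Gb ->
  - Gb * (s%:R - 2) - Ga * (t%:R - 2) + p * (expR (2 * (Gb + Ga)) - 1) * (s * t)%:R <=
  - s%:R * Gb - t%:R * Ga + 2 * (Gb + Ga) + s%:R * t%:R * q * expR (2 * (Gb + Ga)).
Proof.
move=> p0 pq Ga0 Gb0; set e := expR _.
have e1 : 1 <= e by rewrite -expR0 ler_expR; lra.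
have : p * (e - 1) <= q * e by nra.
move/(ler_wpM2r (ler0n R (s * t))); rewrite natrM; lra.
Qed.

Theorem lemma6 (R : realType) (p : R) (a b s t : nat) (Rr Rr' : rect) :
  0 < p < 1 ->
  (0 < a)%N -> (0 < b)%N ->
  subrect Rr Rr' ->
  rwidth Rr = a%:Z -> rheight Rr = b%:Z ->
  rwidth Rr' = (a + s)%N%:Z -> rheight Rr' = (b + t)%N%:Z ->
  let q := - ln (1 - p) in
  Pp p Rr' (Dev Rr Rr') <=
  expR (- s%:R * gfun (b%:R * q) - t%:R * gfun (a%:R * q)
        + 2 * (gfun (b%:R * q) + gfun (a%:R * q))
        + s%:R * t%:R * q * expR (2 * (gfun (b%:R * q) + gfun (a%:R * q)))).
Proof.
move=> p01 a0 b0 [hX1 hX2 hY1 hY2] hw hh hw' hh'; cbv zeta.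
rewrite /rwidth /rheight in hw hh hw' hh'.
pose s1 := `|rx1 Rr - rx1 Rr'|%N; pose s2 := `|rx2 Rr' - rx2 Rr|%N.
pose t1 := `|ry1 Rr - ry1 Rr'|%N; pose t2 := `|ry2 Rr' - ry2 Rr|%N.
have hs : s = (s1 + s2)%N by lia.
have ht : t = (t1 + t2)%N by lia.
have hW : winW Rr' = (s1 + a + s2)%N by rewrite /winW /rwidth; lia.
have hH : winH Rr' = (t1 + b + t2)%N by rewrite /winH /rheight; lia.
have [Gb0 ub0 ub1 quad_b] := gfun_params p01 b0.
have [Ga0 ua0 ua1 quad_a] := gfun_params p01 a0.
apply: le_trans (@Pp_Dev_le _ _ _ _ s1 a s2 t1 b t2 hW hH _ _ _ _ _ _ p01 _ _ _ _
  Ga0 ua0 ua1 quad_a _ Gb0 ub0 ub1 quad_b _) _.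
(* side conditions: coordinates of R inside R', and 1 - (1 - x) = x *)
all: rewrite ?hW ?hH; try lia; try ring.
rewrite -expRD ler_expR hs ht.
have [p0 p1] := andP p01.
exact: exponent_le (le_neg_ln1B p1) Ga0 Gb0.
Qed.
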